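(* Let $\omega\in I^{\mathbb N}$, $k\in\mathbb N$, $m_i=\#\{1\le j\le k:\omega_j=i\}$ for $i\in I$, $\vec m=(m_1,\dots,m_s)$, and $\vec 0\le\vec r\le\vec q$ in $\mathbb N_0^s$. Then $$A(\omega,k)_{\vec q,\vec r}=\sum_{\substack{\vec t\in\mathbb N_0^s:\ \vec q-\vec r-\vec m\le\vec t\le\vec q-\vec r\\ |\vec t|\le m_{s+1}}}(-1)^{|\vec t|}p_{s+1}^{-|\vec t|}\frac{m_{s+1}!}{(m_{s+1}-|\vec t|)!}\prod_{i=1}^s\frac{m_i!\,q_i!}{(m_i-(q_i-r_i-t_i))!\,(q_i-r_i-t_i)!\,t_i!\,r_i!\,p_i^{q_i-r_i-t_i}}.$$ Consequently there is $K\ge1$ depending on $\vec q$ and $\vec p$ but not on $k$ or $\omega$ with $|A(\omega,k)_{\vec q,\vec r}|\le K\big(\prod_{i=1}^s\tilde m_i^{q_i-r_i}\big)\tilde m_{s+1}^{|\vec q|-|\vec r|}$ and $|A(\omega,k)_{\vec q,\vec r}|\le Kk^{|\vec q|}$, where $\tilde m_j=\max\{1,m_j\}$. If $\omega_j\ne s+1$ for all $1\le j\le k$ and $m_i>q_i-r_i$ for all $i\le s$, then $A(\omega,k)_{\vec q,\vec r}\ge K'\prod_{i=1}^sm_i^{q_i-r_i}$ for a constant $K'>0$ depending only on $\vec q$.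
   Context: $s\ge1$, $I=\{1,\dots,s+1\}$, $\vec p=(p_1,\dots,p_s)\in(0,1)^s$ with $\sum p_i<1$, $p_{s+1}=1-\sum_{i\le s}p_i$. Matrices are indexed by $\mathbb N_0^s\times\mathbb N_0^s$ with the usual product; $\mathrm{Id}$ the identity; $1_{\vec n,\vec m}$ has a single entry $1$ at $(\vec n,\vec m)$; $\vec e_i$ the unit vectors; $D_i=\sum_{\vec n}n_i1_{\vec n,\vec n-\vec e_i}$. For $\omega\in I^{\mathbb N}$, $A_0(\omega,1)=p_{\omega_1}\mathrm{Id}+D_{\omega_1}$ if $\omega_1\le s$ and $A_0(\omega,1)=p_{s+1}\mathrm{Id}-\sum_{i\le s}D_i$ if $\omega_1=s+1$; $A_0(\omega,k)=A_0(\omega,1)A_0(\sigma\omega,1)\cdots A_0(\sigma^{k-1}\omega,1)$ with $\sigma$ the left shift; $A(\omega,k)=(p_{\omega_1}\cdots p_{\omega_k})^{-1}A_0(\omega,k)$. $\vec a\le\vec b$ is componentwise, $|\vec t|=\sum t_i$. *)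

From HB Require Import structures.
From mathcomp Require Import all_boot all_order all_algebra.
Set Implicit Arguments. Unset Strict Implicit. Unset Printing Implicit Defensive.
Import Order.TTheory GRing.Theory Num.Theory.
Local Open Scope ring_scope.

(* Vectors in N_0^s : finite functions 'I_s -> nat (coordinate i : 'I_s is the
   paper's coordinate i+1). *)
Definition vec (s : nat) := {ffun 'I_s -> nat}.

Definition vle s (a b : vec s) : bool := [forall i, (a i <= b i)%N].

Definition vnorm s (t : vec s) : nat := (\sum_(i < s) t i)%N.

Definition unitv s (i : 'I_s) : vec s := [ffun j => nat_of_bool (j == i)].

Definition vadd s (a b : vec s) : vec s := [ffun j => (a j + b j)%N].

(* Finite sum of F l over all l in N_0^s with l <= v componentwise. *)
Definition sumle (R : nmodType) s (v : vec s) (F : vec s -> R) : R :=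
  \sum_(l : {ffun 'I_s -> 'I_(vnorm v).+1} | [forall i, (l i <= v i)%N])
     F [ffun i => nat_of_ord (l i)].

Definition mat (R : Type) s := vec s -> vec s -> R.

(* Matrix product  (A B)_{a,b} = sum_l A_{a,l} B_{l,b}, where the sum is taken over
   l <= a: all matrices used below are "lower" (A_{a,l} = 0 unless l <= a), so this
   finite sum is the usual matrix product. *)
Definition mulM (R : pzRingType) s (A B : mat R s) : mat R s :=
  fun a b => sumle a (fun l => A a l * B l b).

Definition IdM (R : pzRingType) {s} : mat R s := fun a b => (a == b)%:R.

(* D_i = sum_n n_i 1_{n, n - e_i} : entry (a,b) is a_i if b + e_i = a, else 0 *)
Definition DM (R : pzRingType) {s} (i : 'I_s) : mat R s :=
  fun a b => (a i)%:R * (vadd b (unitv i) == a)%:R.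

(* I = {1..s+1} is represented by 'I_s.+1, the last element ord_max being s+1 and
   lift ord_max i (i : 'I_s) being the paper's i+1. *)
Definition plast (R : pzRingType) s (p : 'I_s -> R) : R := 1 - \sum_(i < s) p i.

Definition pI (R : pzRingType) s (p : 'I_s -> R) (j : 'I_s.+1) : R :=
  match unlift ord_max j with
  | Some i => p i
  | None => plast p
  end.

(* omega : nat -> 'I_s.+1 ; only omega 1, omega 2, ... are used. *)
Definition shift s (w : nat -> 'I_s.+1) : nat -> 'I_s.+1 := fun j => w j.+1.

Definition A01 (R : pzRingType) s (p : 'I_s -> R) (w : nat -> 'I_s.+1) : mat R s :=
  fun a b =>
    match unlift ord_max (w 1%N) with
    | Some i => p i * IdM R a b + DM R i a b
    | None => plast p * IdM R a b - \sum_(i < s) DM R i a b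
    end.

Fixpoint A0 (R : pzRingType) s (p : 'I_s -> R) (k : nat) (w : nat -> 'I_s.+1)
  : mat R s :=
  match k with
  | 0 => IdM R
  | k'.+1 => mulM (A01 p w) (A0 p k' (shift w))
  end.

Definition AM (R : fieldType) s (p : 'I_s -> R) (w : nat -> 'I_s.+1) (k : nat)
  : mat R s :=
  fun a b => (\prod_(j < k) pI p (w j.+1))^-1 * A0 p k w a b.

Definition mcount s (w : nat -> 'I_s.+1) (k : nat) (i : 'I_s.+1) : nat :=
  count (fun j => w j == i) (iota 1 k).

Definition mtilde s (w : nat -> 'I_s.+1) (k : nat) (i : 'I_s.+1) : nat :=
  maxn 1 (mcount w k i).

(* Weighting the entry (a, b) by b!/a!, the matrix D_i becomes the
   shift a -> a - e_i, i.e. multiplication by y_i on the coefficients of a power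
   series in y = (y_1, ..., y_s).  Hence A(omega,1) is multiplication by 1 + y_i/p_i
   for a letter i <= s and by 1 - |y|/p_(s+1) for the letter s+1, and since these
   commute,
     A(omega,k)_(q,r) = q!/r! [y^(q-r)] prod_i (1 + y_i/p_i)^(m_i) (1 - |y|/p_(s+1))^(m_(s+1)).
   Expanding the product gives the explicit formula.  Bounding the binomial and
   multinomial coefficients termwise gives the upper bounds; when the letter s+1
   does not occur only prod_i C(m_i, q_i - r_i) p_i^-(q_i - r_i) survives, and
   C(m, u) >= m^u / ((u+1)^u u!) for u < m gives the lower bound. *)

From HB Require Import structures.
From mathcomp Require Import all_boot all_order all_algebra.
From mathcomp Require Import zify ring lra.
Set Implicit Arguments. Unset Strict Implicit. Unset Printing Implicit Defensive.
Import Order.TTheory GRing.Theory Num.Theory.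
Local Open Scope ring_scope.

(** * Vectors in N_0^s and sums over boxes *)

Definition vec_of s N (l : {ffun 'I_s -> 'I_N}) : vec s := [ffun i => nat_of_ord (l i)].

Definition in_box s N (a : vec s) : bool := [forall i, (a i < N)%N].

Definition boxsum (R : nmodType) s N (F : vec s -> R) : R :=
  \sum_(l : {ffun 'I_s -> 'I_N}) F (vec_of l).

Definition vsub s (a b : vec s) : vec s := [ffun i => (a i - b i)%N].

Definition vzero s : vec s := [ffun _ => 0%N].

Lemma vsubE s (a b : vec s) i : vsub a b i = (a i - b i)%N.
Proof. by rewrite ffunE. Qed.

Lemma unitvE s (i j : 'I_s) : unitv i j = (j == i) :> nat.
Proof. by rewrite ffunE. Qed.

Lemma vle_refl s (a : vec s) : vle a a.
Proof. by apply/forallP. Qed.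

Lemma vle_trans s (a b c : vec s) : vle a b -> vle b c -> vle a c.
Proof.
by move=> /forallP h1 /forallP h2; apply/forallP => i; exact: leq_trans (h1 i) (h2 i).
Qed.

Lemma vle_vsub s (a b : vec s) : vle (vsub a b) a.
Proof. by apply/forallP => i; rewrite ffunE leq_subr. Qed.

Lemma vle_vsub_unitv s (t v : vec s) i : vle t (vsub v (unitv i)) -> vle t v.
Proof. by move=> h; apply: vle_trans h (vle_vsub _ _). Qed.

Lemma vle_vsub_unitvP s (t v : vec s) i : (0 < v i)%N ->
  vle t (vsub v (unitv i)) = vle t v && (t i < v i)%N.
Proof.
move=> hv; apply/idP/andP => [h|[/forallP h hi]].
  split; first exact: vle_vsub_unitv h.
  by move/forallP: h => /(_ i); rewrite !ffunE eqxx /=; lia.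
apply/forallP => j; rewrite !ffunE; case: (eqVneq j i) => [->|_] /=; first lia.
by rewrite subn0 h.
Qed.

Lemma vle_vsub_unitv2 s (t v : vec s) j : (0 < t j)%N ->
  vle t v = (0 < v j)%N && vle (vsub t (unitv j)) (vsub v (unitv j)).
Proof.
move=> ht; apply/idP/andP => [/forallP h|[hv /forallP h]].
  split; first by have := h j; lia.
  by apply/forallP => i; rewrite !ffunE leq_sub2r.
apply/forallP => i; have := h i; rewrite !ffunE.
by case: (eqVneq i j) => [->|_] /=; rewrite ?subn0 ?subn1 //; lia.
Qed.

Lemma vle_vadd_unitv s (t v : vec s) j : (0 < v j)%N -> vle t (vsub v (unitv j)) ->
  vle (vadd t (unitv j)) v.
Proof.
move=> hv /forallP h; apply/forallP => i; have := h i; rewrite !ffunE.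
by case: (eqVneq i j) => [->|_] /=; rewrite ?subn0 ?addn0 ?subn1 ?addn1 //; lia.
Qed.

Lemma vadd_unitv_eq s (t a : vec s) j :
  (vadd t (unitv j) == a) = (0 < a j)%N && (t == vsub a (unitv j)).
Proof.
apply/eqP/andP => [e|[ha /eqP e]].
  have ea i : (t i + (i == j))%N = a i.
    by have := congr1 (fun f : vec s => f i) e; rewrite !ffunE.
  split; first by rewrite -(ea j) eqxx addn1.
  apply/eqP/ffunP => i; rewrite !ffunE -(ea i).
  by case: (i == j) => /=; rewrite ?addn1 ?subn1 ?addn0 ?subn0.
apply/ffunP => i; rewrite !ffunE e !ffunE.
by case: (eqVneq i j) => [->|_] /=; rewrite ?addn1 ?subn1 ?addn0 ?subn0 ?prednK.
Qed.

Lemma vsub_vsub_unitv s (v t : vec s) j : (0 < t j)%N ->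
  vsub (vsub v (unitv j)) (vsub t (unitv j)) = vsub v t.
Proof.
move=> h; apply/ffunP => i; rewrite !ffunE.
by case: (eqVneq i j) => [->|_] /=; rewrite ?subn0 ?subn1 //; lia.
Qed.

Lemma vsubAC s (a b : vec s) i : vsub (vsub a (unitv i)) b = vsub (vsub a b) (unitv i).
Proof. by apply/ffunP => j; rewrite !ffunE subnAC. Qed.

Lemma vsubvv s (a : vec s) : vsub a a = vzero s.
Proof. by apply/ffunP => i; rewrite !ffunE subnn. Qed.

Lemma vsubv0 s (a : vec s) : vsub a (vzero s) = a.
Proof. by apply/ffunP => i; rewrite !ffunE subn0. Qed.

Lemma vle0v s (a : vec s) : vle (vzero s) a.
Proof. by apply/forallP => i; rewrite ffunE. Qed.

Lemma vle_vsub_eq0 s (a b : vec s) : vle b a -> (vsub a b == vzero s) = (a == b).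
Proof.
move=> /forallP hb; apply/eqP/eqP => [e|->]; last exact: vsubvv.
apply/ffunP => i; have := congr1 (fun f : vec s => f i) e; rewrite !ffunE => /eqP.
by rewrite subn_eq0 => h; apply/eqP; rewrite eqn_leq h hb.
Qed.

Lemma vnorm_ge s (v : vec s) i : (v i <= vnorm v)%N.
Proof. by rewrite /vnorm (bigD1 i) //= leq_addr. Qed.

Lemma vnorm_le s (t v : vec s) : vle t v -> (vnorm t <= vnorm v)%N.
Proof. by move=> /forallP h; apply: leq_sum => i _; apply: h. Qed.

Lemma vnorm_eq0 s (t : vec s) : (vnorm t == 0)%N = (t == vzero s).
Proof.
rewrite /vnorm sum_nat_eq0; apply/forallP/eqP => [h|->]; last by move=> i; rewrite ffunE.
by apply/ffunP => i; rewrite ffunE; apply/eqP; apply: h.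
Qed.

Lemma vnorm_vsub s (q r : vec s) : vle r q -> vnorm (vsub q r) = (vnorm q - vnorm r)%N.
Proof.
move=> /forallP h; rewrite /vnorm -sumnB; last by move=> i _; apply: h.
by apply: eq_bigr => i _; rewrite vsubE.
Qed.

Lemma vnorm_vsub_unitv s (t : vec s) j : (0 < t j)%N ->
  vnorm (vsub t (unitv j)) = (vnorm t).-1.
Proof.
move=> h; rewrite /vnorm (bigD1 j) //= [in RHS](bigD1 j) //= vsubE unitvE eqxx.
rewrite (eq_bigr (fun i => t i)) => [|i hi]; last by rewrite vsubE unitvE (negbTE hi) subn0.
by rewrite subn1; case: (t j) h.
Qed.

Lemma in_box_vec_of s N (l : {ffun 'I_s -> 'I_N}) : in_box N (vec_of l).
Proof. by apply/forallP => i; rewrite ffunE. Qed.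

Lemma in_box_vle s N (t v : vec s) : vle t v -> in_box N v -> in_box N t.
Proof.
by move=> /forallP h /forallP h'; apply/forallP => i; exact: leq_ltn_trans (h i) (h' i).
Qed.

Lemma in_box_vnorm s (v : vec s) : in_box (vnorm v).+1 v.
Proof. by apply/forallP => i; rewrite ltnS vnorm_ge. Qed.

Lemma boxsum_ext (R : nmodType) s N (F G : vec s -> R) :
  (forall t, in_box N t -> F t = G t) -> boxsum N F = boxsum N G.
Proof. by move=> h; apply: eq_bigr => l _; apply/h/in_box_vec_of. Qed.

Lemma boxsumD (R : nmodType) s N (F G : vec s -> R) :
  boxsum N (fun t => F t + G t) = boxsum N F + boxsum N G.
Proof. exact: big_split. Qed.

Lemma boxsum_sum (R : nmodType) s N n (F : 'I_n -> vec s -> R) :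
  boxsum N (fun t => \sum_(j < n) F j t) = \sum_(j < n) boxsum N (F j).
Proof. exact: exchange_big. Qed.

Lemma boxsumMl (R : pzRingType) s N (c : R) (F : vec s -> R) :
  boxsum N (fun t => c * F t) = c * boxsum N F.
Proof. by rewrite /boxsum mulr_sumr. Qed.

Lemma boxsum_dirac (R : pzRingType) s N (a : vec s) (F : vec s -> R) :
  boxsum N (fun t => (t == a)%:R * F t) = (in_box N a)%:R * F a.
Proof.
have vec_of_inj (l l' : {ffun 'I_s -> 'I_N}) : vec_of l = vec_of l' -> l = l'.
  by move=> e; apply/ffunP => i; apply: val_inj; have := congr1 (fun f : vec s => f i) e;
     rewrite !ffunE.
case: (boolP (in_box N a)) => ha.
- have hi i : (a i < N)%N by move/forallP: ha.
  pose l0 : {ffun 'I_s -> 'I_N} := [ffun i => Ordinal (hi i)].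
  have vl0 : vec_of l0 = a by apply/ffunP => i; rewrite !ffunE.
  rewrite /boxsum (bigD1 l0) //= vl0 eqxx mul1r big1 ?addr0 // => l hl.
  case: eqP => [e|]; last by rewrite mul0r.
  by move/eqP: hl; case; apply: vec_of_inj; rewrite e vl0.
- rewrite mul0r /boxsum big1 // => l _; case: eqP => [e|]; last by rewrite mul0r.
  by move/negP: ha; case; rewrite -e; exact: in_box_vec_of.
Qed.

Lemma boxsum_diracC (R : pzRingType) s N (a : vec s) (c : R) :
  boxsum N (fun t => (t == a)%:R * c) = (in_box N a)%:R * c.
Proof. exact: (boxsum_dirac N a (fun _ => c)). Qed.

(* Reindexing [t] by [t + e_j]; boundary terms leaving the box must vanish. *)
Lemma boxsum_shift (R : pzRingType) s N j (X : vec s -> R) :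
  (forall t, ~~ in_box N (vadd t (unitv j)) -> X t = 0) ->
  boxsum N (fun t => (0 < t j)%:R * X (vsub t (unitv j))) = boxsum N X.
Proof.
move=> hX.
transitivity (boxsum N (fun t => boxsum N (fun t' => (vadd t' (unitv j) == t)%:R * X t'))).
  apply: boxsum_ext => t ht.
  rewrite (boxsum_ext (G := fun t' => (t' == vsub t (unitv j))%:R * ((0 < t j)%:R * X t')))
    => [|t' _].
    by rewrite (boxsum_dirac _ _ (fun t' => _ * X t')) (in_box_vle (vle_vsub _ _) ht) mul1r.
  by rewrite vadd_unitv_eq; case: (0 < t j)%N; case: eqP; rewrite /= ?(mul0r, mulr0, mul1r).
rewrite /boxsum exchange_big; apply: eq_bigr => l _ /=.
transitivity (boxsum N (fun t => (t == vadd (vec_of l) (unitv j))%:R * X (vec_of l))).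
  by apply: eq_bigr => l' _; rewrite eq_sym.
rewrite boxsum_diracC; case: (boolP (in_box _ _)) => h; first by rewrite mul1r.
by rewrite hX // mulr0.
Qed.

Lemma boxsum_support (R : pzRingType) s M N (v : vec s) (G : vec s -> R) :
  (forall t, ~~ vle t v -> G t = 0) -> in_box M v -> in_box N v ->
  boxsum M G = boxsum N G.
Proof.
move=> hG hM hN.
have restrict N' : in_box N' v -> forall t, G t = (in_box N' t)%:R * G t.
  move=> hN' t; case: (boolP (vle t v)) => ht; first by rewrite (in_box_vle ht hN') mul1r.
  by rewrite hG // mulr0.
transitivity (boxsum M (fun t => boxsum N (fun t' => (t' == t)%:R * G t'))).
  by apply: eq_bigr => l _; rewrite boxsum_dirac -restrict.
rewrite /boxsum exchange_big /=; apply: eq_bigr => l _.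
transitivity (boxsum M (fun t => (t == vec_of l)%:R * G (vec_of l))).
  by apply: eq_bigr => l' _; rewrite eq_sym.
by rewrite boxsum_diracC -restrict.
Qed.

Lemma sumle_boxsum (R : pzRingType) s N (v : vec s) (F : vec s -> R) :
  in_box N v -> sumle v F = boxsum N (fun t => (vle t v)%:R * F t).
Proof.
move=> hN; rewrite -(boxsum_support _ (in_box_vnorm v) hN); last first.
  by move=> t /negbTE ->; rewrite mul0r.
rewrite /sumle /boxsum big_mkcond; apply: eq_bigr => l _.
have -> : [forall i, (l i <= v i)%N] = vle (vec_of l) v.
  by apply: eq_forallb => i; rewrite ffunE.
by case: (vle _ _); rewrite ?mul1r ?mul0r.
Qed.

Lemma sumle_ext (R : pzRingType) s (v : vec s) (F G : vec s -> R) :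
  (forall t, vle t v -> F t = G t) -> sumle v F = sumle v G.
Proof.
move=> h; rewrite !(sumle_boxsum _ (in_box_vnorm v)); apply: boxsum_ext => t _.
by case: (boolP (vle t v)) => ht; [rewrite h | rewrite !mul0r].
Qed.

Lemma sumleD (R : nmodType) s (v : vec s) (F G : vec s -> R) :
  sumle v (fun t => F t + G t) = sumle v F + sumle v G.
Proof. exact: big_split. Qed.

Lemma sumleN (R : zmodType) s (v : vec s) (F : vec s -> R) :
  sumle v (fun t => - F t) = - sumle v F.
Proof. by rewrite /sumle sumrN. Qed.

Lemma sumle_sum (R : nmodType) s (v : vec s) n (F : 'I_n -> vec s -> R) :
  sumle v (fun t => \sum_(j < n) F j t) = \sum_(j < n) sumle v (F j).
Proof. exact: exchange_big. Qed.

Lemma sumleMl (R : pzRingType) s (v : vec s) (c : R) (F : vec s -> R) :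
  sumle v (fun t => c * F t) = c * sumle v F.
Proof. by rewrite /sumle mulr_sumr. Qed.

Lemma sumle_IdM (R : pzRingType) s (a : vec s) (Y : vec s -> R) :
  sumle a (fun l => IdM R a l * Y l) = Y a.
Proof.
rewrite (sumle_boxsum _ (in_box_vnorm a)).
rewrite (boxsum_ext (G := fun t => (t == a)%:R * Y t)) => [|t _].
  by rewrite boxsum_dirac in_box_vnorm mul1r.
by rewrite /IdM eq_sym; case: eqP => [->|_]; rewrite ?vle_refl ?mul1r ?mul0r ?mulr0.
Qed.

Lemma sumle_DM (R : pzRingType) s (a : vec s) j (Y : vec s -> R) :
  sumle a (fun l => DM R j a l * Y l) = (a j)%:R * Y (vsub a (unitv j)).
Proof.
rewrite (sumle_boxsum _ (in_box_vnorm a)).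
rewrite (boxsum_ext (G := fun t => (t == vsub a (unitv j))%:R * ((a j)%:R * Y t))).
  by rewrite boxsum_dirac (in_box_vle (vle_vsub _ _) (in_box_vnorm a)) mul1r.
move=> t _; rewrite /DM vadd_unitv_eq.
case: (posnP (a j)) => [->|hj]; first by rewrite /= !(mul0r, mulr0).
case: eqP => [->|_]; last by rewrite !(mul0r, mulr0).
by rewrite vle_vsub /= !mul1r mulr1.
Qed.

(** * Coefficients of the generating function *)

Section Coefficients.

Variable R : numFieldType.
Variable s : nat.
Implicit Types (p : 'I_s -> R) (m : 'I_s -> nat) (t u v : vec s).

Lemma fact_neq0 n : (n`!%:R : R) != 0.
Proof. by rewrite pnatr_eq0 -lt0n fact_gt0. Qed.

Lemma prod_fact_neq0 t : \prod_(i < s) ((t i)`!%:R : R) != 0.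
Proof. by apply/prodf_neq0 => i _; exact: fact_neq0. Qed.

Lemma prod_fact_vsub_unitv t j : (0 < t j)%N ->
  (\prod_(i < s) ((vsub t (unitv j)) i)`!%:R) * (t j)%:R = \prod_(i < s) ((t i)`!%:R : R).
Proof.
move=> h; rewrite (bigD1 j) //= [in RHS](bigD1 j) //= vsubE unitvE eqxx /=.
rewrite (eq_bigr (fun i => ((t i)`!%:R : R))) => [|i hi]; last first.
  by rewrite vsubE unitvE (negbTE hi) subn0.
by case: (t j) h => // n _; rewrite factS subn1 /= natrM; ring.
Qed.

(* [y^t] (1 - x (y_1 + ... + y_s))^M, by the multinomial theorem *)
Definition lin_coef (x : R) (M : nat) t : R :=
  (- x) ^+ vnorm t * (M ^_ vnorm t)%:R / \prod_(i < s) (t i)`!%:R.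

(* [y^u] prod_i (1 + y_i / p_i)^(m_i) *)
Definition binom_coef p m u : R := \prod_(i < s) ('C(m i, u i)%:R * (p i)^-1 ^+ u i).

Definition gterm p m M v t : R :=
  (vle t v)%:R * lin_coef (plast p)^-1 M t * binom_coef p m (vsub v t).

(* [y^v] prod_i (1 + y_i / p_i)^(m_i) * (1 - |y| / p_(s+1))^M, as a Cauchy product *)
Definition gcoef p m M v : R := sumle v (gterm p m M v).

Lemma gcoef_ext p m m' M v : (forall j, m j = m' j) -> gcoef p m M v = gcoef p m' M v.
Proof.
move=> h; apply: sumle_ext => t _; rewrite /gterm /binom_coef.
by congr (_ * _); apply: eq_bigr => i _; rewrite h.
Qed.

Lemma gcoef_boxsum p m M N v : in_box N v -> gcoef p m M v = boxsum N (gterm p m M v).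
Proof.
move=> h; rewrite /gcoef (sumle_boxsum _ h); apply: boxsum_ext => t _.
by rewrite /gterm; case: (vle t v); rewrite ?mul1r ?mul0r.
Qed.

Lemma ffactS_pascal n k : (n.+1 ^_ k.+1 = n ^_ k.+1 + k.+1 * n ^_ k)%N.
Proof.
rewrite ffactSS ffactnSr; case: (leqP k n) => h; last by rewrite ffact_small // !muln0.
by rewrite [X in (_ = X + _)%N]mulnC -mulnDl; congr (_ * _)%N; lia.
Qed.

Lemma lin_coefS x M t :
  lin_coef x M.+1 t =
  lin_coef x M t + \sum_(j < s) (0 < t j)%:R * (- x) * lin_coef x M (vsub t (unitv j)).
Proof.
set F := \prod_(i < s) ((t i)`!%:R : R).
have term_j j : (0 < t j)%:R * (- x) * lin_coef x M (vsub t (unitv j)) =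
    (- x) ^+ vnorm t * (M ^_ (vnorm t).-1)%:R / F * (t j)%:R.
  case: (posnP (t j)) => [->|hp]; first by rewrite !mul0r mulr0.
  rewrite mul1r /lin_coef vnorm_vsub_unitv // /F -(prod_fact_vsub_unitv hp).
  have [T hT] : exists T, vnorm t = T.+1.
    by exists (vnorm t).-1; have := vnorm_ge t j; lia.
  have htj : (t j)%:R != 0 :> R by rewrite pnatr_eq0 -lt0n.
  have := prod_fact_neq0 (vsub t (unitv j)).
  by rewrite hT /= exprS => hF'; field; rewrite hF' htj.
rewrite (eq_bigr _ (fun j _ => term_j j)) -mulr_sumr -natr_sum -/(vnorm t).
rewrite /lin_coef -/F; case: (vnorm t) => [|T]; first by rewrite !ffactn0 mulr0 addr0.
by rewrite ffactS_pascal natrD natrM /=; ring.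
Qed.

Lemma binom_coef_lift p m m' u i : (forall j, m' j = ((i == j) + m j)%N) ->
  binom_coef p m' u =
  binom_coef p m u + (0 < u i)%:R * (p i)^-1 * binom_coef p m (vsub u (unitv i)).
Proof.
move=> hm; rewrite /binom_coef (bigD1 i) //= [X in _ = X + _](bigD1 i) //=.
rewrite [X in _ = _ + _ * X](bigD1 i) //=.
set P := \prod_(j < s | j != i) ('C(m j, u j)%:R * (p j)^-1 ^+ u j).
have -> : \prod_(j < s | j != i) ('C(m' j, u j)%:R * (p j)^-1 ^+ u j) = P.
  by apply: eq_bigr => j hj; rewrite hm eq_sym (negbTE hj).
have -> : \prod_(j < s | j != i) ('C(m j, vsub u (unitv i) j)%:R
            * (p j)^-1 ^+ vsub u (unitv i) j) = P.
  by apply: eq_bigr => j hj; rewrite vsubE unitvE (negbTE hj) subn0.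
rewrite hm eqxx vsubE unitvE eqxx subn1.
case: (u i) => [|n] /=; first by rewrite !bin0 !mul0r addr0.
by rewrite add1n binS natrD exprS; ring.
Qed.

Lemma binom_coef0 p u : binom_coef p (fun _ => 0%N) u = (u == vzero s)%:R.
Proof.
rewrite /binom_coef; case: eqP => [->|hne].
  by rewrite big1 // => i _; rewrite ffunE bin0 expr0 mulr1.
have [i hi] : exists i, u i != 0%N.
  apply/existsP; apply: contraNT (introN eqP hne) => /existsPn h.
  by apply/eqP/ffunP => i; rewrite ffunE; apply/eqP; move: (h i); rewrite negbK.
by rewrite (bigD1 i) //= bin0n (negbTE hi) !mul0r.
Qed.

Lemma gterm_lift p m m' M v t i : (forall j, m' j = ((i == j) + m j)%N) ->
  gterm p m' M v t =
  gterm p m M v t + (0 < v i)%:R * (p i)^-1 * gterm p m M (vsub v (unitv i)) t.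
Proof.
move=> hm; rewrite /gterm (binom_coef_lift _ _ hm) vsubAC vsubE.
case: (posnP (v i)) => [->|hvi] /=; first by rewrite !(mul0r, mulr0, addr0).
rewrite (vle_vsub_unitvP _ hvi) subn_gt0.
by case: (vle t v); case: (t i < v i)%N; rewrite /= ?(mul0r, mulr0, mul1r, addr0); ring.
Qed.

Lemma gcoef_lift p m m' M v i : (forall j, m' j = ((i == j) + m j)%N) ->
  gcoef p m' M v =
  gcoef p m M v + (0 < v i)%:R * (p i)^-1 * gcoef p m M (vsub v (unitv i)).
Proof.
move=> hm; have hN := in_box_vnorm v.
rewrite !(gcoef_boxsum _ _ _ hN) (gcoef_boxsum _ _ _ (in_box_vle (vle_vsub _ _) hN)).
by rewrite -boxsumMl -boxsumD; apply: boxsum_ext => t _; rewrite (gterm_lift _ _ _ _ hm).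
Qed.

Lemma gtermS p m M v t :
  gterm p m M.+1 v t = gterm p m M v t + \sum_(j < s) (- (plast p)^-1) * (0 < v j)%:R *
     ((0 < t j)%:R * gterm p m M (vsub v (unitv j)) (vsub t (unitv j))).
Proof.
rewrite /gterm lin_coefS mulrDr mulrDl; congr (_ + _).
rewrite mulr_sumr mulr_suml; apply: eq_bigr => j _.
case: (posnP (t j)) => [_|hp]; first by rewrite !(mul0r, mulr0).
rewrite vsub_vsub_unitv // (vle_vsub_unitv2 v hp).
by case: (0 < v j)%N; case: (vle _ _); rewrite /= ?(mul0r, mulr0, mul1r, mulr1) //; ring.
Qed.

Lemma gcoefS p m M v :
  gcoef p m M.+1 v =
  gcoef p m M v - (plast p)^-1 * \sum_(j < s) (0 < v j)%:R * gcoef p m M (vsub v (unitv j)).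
Proof.
have hN := in_box_vnorm v.
rewrite !(gcoef_boxsum _ _ _ hN) (boxsum_ext (fun t _ => gtermS p m M v t)).
rewrite boxsumD boxsum_sum mulr_sumr -sumrN; congr (_ + _); apply: eq_bigr => j _.
rewrite boxsumMl; case: (posnP (v j)) => [_|hv]; first by rewrite !(mul0r, mulr0, oppr0).
rewrite boxsum_shift; last first.
  move=> t ht; rewrite /gterm; case: (boolP (vle _ _)) => h; last by rewrite !mul0r.
  by move/negP: ht; case; apply: in_box_vle (vle_vadd_unitv hv h) hN.
by rewrite (gcoef_boxsum _ _ _ (in_box_vle (vle_vsub _ _) hN)); ring.
Qed.

Lemma gcoef0 p m v : gcoef p m 0 v = binom_coef p m v.
Proof.
rewrite (gcoef_boxsum _ _ _ (in_box_vnorm v)).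
rewrite (boxsum_ext (G := fun t => (t == vzero s)%:R * binom_coef p m v)) => [|t _].
  by rewrite boxsum_diracC (in_box_vle (vle0v v) (in_box_vnorm v)) mul1r.
rewrite /gterm /lin_coef ffact0n vnorm_eq0; case: eqP => [->|_]; last first.
  by rewrite !(mul0r, mulr0).
rewrite vle0v vsubv0 big1 => [|i _]; last by rewrite ffunE.
have -> : vnorm (vzero s) = 0%N by apply/eqP; rewrite vnorm_eq0.
by rewrite /= invr1 !mulr1 mul1r.
Qed.

End Coefficients.

(** * The closed form of A *)

Section ClosedForm.

Variable R : numFieldType.
Variable s : nat.
Implicit Types (p : 'I_s -> R) (m : 'I_s -> nat) (a b : vec s).

Definition fact_ratio a b : R := \prod_(i < s) ((a i)`!%:R / (b i)`!%:R).

Lemma fact_ratio_vv a : fact_ratio a a = 1.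
Proof. by rewrite /fact_ratio big1 // => i _; rewrite divff // fact_neq0. Qed.

Lemma fact_ratio_vsub_unitv a b i : (0 < a i)%N ->
  (a i)%:R * fact_ratio (vsub a (unitv i)) b = fact_ratio a b.
Proof.
move=> h; rewrite /fact_ratio (bigD1 i) //= [in RHS](bigD1 i) //= vsubE unitvE eqxx /=.
rewrite (eq_bigr (fun j => (a j)`!%:R / (b j)`!%:R)) => [|j hj]; last first.
  by rewrite vsubE unitvE (negbTE hj) subn0.
by case: (a i) h => // n _; rewrite factS subn1 /= natrM; ring.
Qed.

(* A_0(omega, k)_(a, b) divided by p_(omega_1) ... p_(omega_k), with m and M the
   multiplicities of the letters i <= s and s+1 in omega_1 ... omega_k *)
Definition Aclosed p m M a b : R := (vle b a)%:R * fact_ratio a b * gcoef p m M (vsub a b).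

Lemma Aclosed_ext p m m' M a b : (forall j, m j = m' j) ->
  Aclosed p m M a b = Aclosed p m' M a b.
Proof. by move=> h; rewrite /Aclosed (gcoef_ext _ _ _ h). Qed.

Lemma Aclosed_vsub_unitv p m M a b i :
  (a i)%:R * Aclosed p m M (vsub a (unitv i)) b =
  (vle b a)%:R * fact_ratio a b * ((0 < vsub a b i)%:R * gcoef p m M (vsub (vsub a b) (unitv i))).
Proof.
rewrite /Aclosed vsubAC vsubE.
case: (posnP (a i)) => [->|ha]; first by rewrite sub0n !(mulr0n, mul0r, mulr0).
case: (boolP (vle b a)) => hb; last first.
  by rewrite (vle_vsub_unitvP _ ha) (negbTE hb) !(mul0r, mulr0).
rewrite (vle_vsub_unitvP _ ha) hb subn_gt0 -(fact_ratio_vsub_unitv b ha).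
by case: (b i < a i)%N; rewrite /= ?(mul0r, mulr0, mul1r); ring.
Qed.

Lemma Aclosed_lift p m m' M a b i : (forall j, m' j = ((i == j) + m j)%N) ->
  Aclosed p m' M a b =
  Aclosed p m M a b + (p i)^-1 * ((a i)%:R * Aclosed p m M (vsub a (unitv i)) b).
Proof. by move=> hm; rewrite Aclosed_vsub_unitv /Aclosed (gcoef_lift _ _ _ hm); ring. Qed.

Lemma AclosedS p m M a b :
  Aclosed p m M.+1 a b =
  Aclosed p m M a b - (plast p)^-1 * \sum_(j < s) (a j)%:R * Aclosed p m M (vsub a (unitv j)) b.
Proof.
rewrite (eq_bigr _ (fun j _ => Aclosed_vsub_unitv p m M a b j)) /Aclosed gcoefS.
by rewrite -!mulr_sumr; ring.
Qed.

Lemma Aclosed0 p a b : Aclosed p (fun _ => 0%N) 0 a b = IdM R a b.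
Proof.
rewrite /Aclosed gcoef0 binom_coef0 /IdM.
case: (boolP (vle b a)) => hb; last first.
  have /negbTE -> : a != b by apply: contraNneq hb => ->; exact: vle_refl.
  by rewrite !mul0r.
by rewrite vle_vsub_eq0 //; case: eqP => [->|]; rewrite ?fact_ratio_vv ?mulr0 ?mul1r.
Qed.

End ClosedForm.

Arguments fact_ratio {R s}.

Lemma A0S_lift (R : pzRingType) s (p : 'I_s -> R) k w a b i : w 1%N = lift ord_max i ->
  A0 p k.+1 w a b =
  p i * A0 p k (shift w) a b + (a i)%:R * A0 p k (shift w) (vsub a (unitv i)) b.
Proof.
move=> hw; rewrite /A0 -/A0 /mulM.
rewrite (sumle_ext (G := fun l => p i * (IdM R a l * A0 p k (shift w) l b)
                                  + DM R i a l * A0 p k (shift w) l b)) => [|t _].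
  by rewrite sumleD sumleMl sumle_IdM sumle_DM.
by rewrite /A01 hw liftK mulrDl mulrA.
Qed.

Lemma A0S_last (R : pzRingType) s (p : 'I_s -> R) k w a b : w 1%N = ord_max ->
  A0 p k.+1 w a b =
  plast p * A0 p k (shift w) a b
  - \sum_(j < s) (a j)%:R * A0 p k (shift w) (vsub a (unitv j)) b.
Proof.
move=> hw; rewrite /A0 -/A0 /mulM.
rewrite (sumle_ext (G := fun l => plast p * (IdM R a l * A0 p k (shift w) l b)
                        - \sum_(j < s) DM R j a l * A0 p k (shift w) l b)) => [|t _].
  rewrite sumleD sumleN sumleMl sumle_IdM sumle_sum.
  by congr (_ - _); apply: eq_bigr => j _; rewrite sumle_DM.
by rewrite /A01 hw unlift_none mulrBl mulrA mulr_suml.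
Qed.

Definition mcount_lift s (w : nat -> 'I_s.+1) k (i : 'I_s) : nat := mcount w k (lift ord_max i).

Definition prod_pI (R : pzRingType) s (p : 'I_s -> R) w k : R := \prod_(j < k) pI p (w j.+1).

Lemma mcountS s (w : nat -> 'I_s.+1) k j :
  mcount w k.+1 j = ((w 1%N == j) + mcount (shift w) k j)%N.
Proof. by rewrite /mcount /= (iotaDl 1 1 k) count_map. Qed.

Lemma pprodS (R : pzRingType) s (p : 'I_s -> R) w k :
  prod_pI p w k.+1 = pI p (w 1%N) * prod_pI p (shift w) k.
Proof. by rewrite /prod_pI big_ord_recl. Qed.

Section MatrixA.

Variable R : numFieldType.
Variable s : nat.
Variable p : 'I_s -> R.
Hypothesis p_neq0 : forall i, p i != 0.
Hypothesis plast_neq0 : plast p != 0.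

Lemma A0_closed k w a b :
  A0 p k w a b = prod_pI p w k * Aclosed p (mcount_lift w k) (mcount w k ord_max) a b.
Proof.
elim: k w a b => [|k IH] w a b; first by rewrite /prod_pI big_ord0 mul1r Aclosed0.
case: (unliftP ord_max (w 1%N)) => [i hw|hw].
  have hm j : mcount_lift w k.+1 j = ((i == j) + mcount_lift (shift w) k j)%N.
    by rewrite /mcount_lift mcountS hw (inj_eq lift_inj).
  rewrite (A0S_lift _ _ _ _ hw) !IH pprodS /pI hw liftK (Aclosed_lift _ _ _ _ hm).
  rewrite mcountS hw eq_sym (negbTE (neq_lift _ _)) add0n.
  by have := p_neq0 i => hpi; field.
have hm j : mcount_lift w k.+1 j = mcount_lift (shift w) k j.
  by rewrite /mcount_lift mcountS hw (negbTE (neq_lift _ _)).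
rewrite (A0S_last _ _ _ _ hw); under eq_bigr => j _ do rewrite IH.
rewrite IH pprodS /pI hw unlift_none.
rewrite (Aclosed_ext _ _ _ _ hm) mcountS hw eqxx add1n AclosedS.
rewrite (eq_bigr _ (fun j _ => mulrCA _ _ _)) -mulr_sumr.
by field.
Qed.

Lemma AM_closed w k (q r : vec s) : vle r q ->
  AM p w k q r = fact_ratio q r * gcoef p (mcount_lift w k) (mcount w k ord_max) (vsub q r).
Proof.
move=> hrq; rewrite /AM A0_closed -/(prod_pI p w k) mulKf; last first.
  by apply/prodf_neq0 => j _; rewrite /pI; case: (unlift _ _).
by rewrite /Aclosed hrq mul1r.
Qed.

End MatrixA.

Lemma fact_ratio_binom_coord (R : numFieldType) (x : R) (n q r t u : nat) :
  x != 0 -> (u <= n)%N ->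
  q`!%:R / r`!%:R * ((t`!%:R)^-1 * ('C(n, u)%:R * x^-1 ^+ u)) =
  n`!%:R * q`!%:R / ((n - u)`!%:R * u`!%:R * t`!%:R * r`!%:R * x ^+ u) :> R.
Proof.
move=> hx hu; rewrite -(bin_fact hu) !natrM exprVn.
have := fact_neq0 R u; have := fact_neq0 R (n - u).
have := fact_neq0 R t; have := fact_neq0 R r => h1 h2 h3 h4.
by field; rewrite expf_neq0 // h1 h2 h3 h4.
Qed.

Section ExplicitFormula.

Variable R : numFieldType.
Variable s : nat.
Variable p : 'I_s -> R.
Hypothesis p_neq0 : forall i, p i != 0.
Hypothesis plast_neq0 : plast p != 0.

Definition explicit_term (m : 'I_s.+1 -> nat) (q r t : vec s) : R :=
  if [forall i, (q i - r i - m (lift ord_max i) <= t i)%N] && (vnorm t <= m ord_max)%N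
  then (-1) ^+ vnorm t * (plast p)^-1 ^+ vnorm t
       * ((m ord_max)`!%:R / (m ord_max - vnorm t)`!%:R)
       * \prod_(i < s)
           ((m (lift ord_max i))`!%:R * (q i)`!%:R
            / ((m (lift ord_max i) - (q i - r i - t i))`!%:R
               * (q i - r i - t i)`!%:R * (t i)`!%:R * (r i)`!%:R
               * p i ^+ (q i - r i - t i)))
  else 0.

Lemma fact_ratio_gterm (q r t : vec s) (m : 'I_s.+1 -> nat) : vle t (vsub q r) ->
  fact_ratio q r * gterm p (fun i => m (lift ord_max i)) (m ord_max) (vsub q r) t =
  explicit_term m q r t.
Proof.
move=> ht; rewrite /gterm ht mul1r /lin_coef /binom_coef /explicit_term.
under [\prod_(i < s) ('C(_, _)%:R * _)]eq_bigr => i _ do rewrite !vsubE.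
case: ifP => [/andP [/forallP hc hT] | hcf].
  rewrite [(- (plast p)^-1) ^+ _]exprNn -(ffact_fact hT) natrM mulfK ?fact_neq0 //.
  have hu i : (q i - r i - t i <= m (lift ord_max i))%N by have := hc i; lia.
  rewrite [in RHS](eq_bigr _ (fun i _ => esym (fact_ratio_binom_coord _ _ _ (p_neq0 i) (hu i)))).
  by rewrite /fact_ratio !big_split /= !prodfV; ring.
case: (boolP [forall i, (q i - r i - m (lift ord_max i) <= t i)%N]) => hf; last first.
  move/forallPn: hf => [i hi].
  rewrite [\prod_(j < s) ('C(_, _)%:R * _)](bigD1 i) //= bin_small; last by lia.
  by rewrite !(mul0r, mulr0).
move: hcf; rewrite hf /= => /negbT; rewrite -ltnNge => hlt.
by rewrite ffact_small // !(mul0r, mulr0).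
Qed.

Lemma AM_formula w k (q r : vec s) : vle r q ->
  AM p w k q r = sumle [ffun i => (q i - r i)%N] (explicit_term (mcount w k) q r).
Proof.
move=> hrq; rewrite (AM_closed p_neq0 plast_neq0 _ _ hrq) /gcoef -sumleMl.
have -> : [ffun i => (q i - r i)%N] = vsub q r by [].
by apply: sumle_ext => t ht; rewrite -fact_ratio_gterm.
Qed.

End ExplicitFormula.

(** * Upper bounds *)

Lemma leq_exp2rW a b e : (a <= b)%N -> (a ^ e <= b ^ e)%N.
Proof. by move=> h; elim: e => // e IH; rewrite !expnS leq_mul. Qed.

Lemma ffact_le_exp n k : (n ^_ k <= n ^ k)%N.
Proof. by elim: k => // k IH; rewrite ffactnSr expnSr leq_mul ?leq_subr. Qed.

Lemma bin_le_exp n k : ('C(n, k) <= n ^ k)%N.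
Proof. by apply: leq_trans (ffact_le_exp n k); rewrite -bin_ffact leq_pmulr ?fact_gt0. Qed.

Lemma exp_le_ffact m v : (v < m)%N -> (m ^ v <= v.+1 ^ v * m ^_ v)%N.
Proof.
move=> h; rewrite ffact_prod.
have -> : (m ^ v = \prod_(i < v) m)%N by rewrite prod_nat_const card_ord.
have -> : (v.+1 ^ v = \prod_(i < v) v.+1)%N by rewrite prod_nat_const card_ord.
by rewrite -big_split /=; apply: leq_prod => i _; have := ltn_ord i; nia.
Qed.

Lemma exp_le_bin m v q : (v < m)%N -> (v <= q)%N ->
  (m ^ v <= 'C(m, v) * (q.+1 ^ q * q`!))%N.
Proof.
move=> h hq; apply: leq_trans (exp_le_ffact h) _.
rewrite -bin_ffact mulnCA; apply: leq_mul => //; apply: leq_mul; last exact: leq_fact.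
by apply: leq_trans (leq_exp2rW _ (_ : v.+1 <= q.+1)%N) _; rewrite ?leq_pexp2l.
Qed.

Lemma mcount_le s (w : nat -> 'I_s.+1) k j : (mcount w k j <= k)%N.
Proof. by apply: leq_trans (count_size _ _) _; rewrite size_iota. Qed.

Lemma mcount_last_eq0 s (w : nat -> 'I_s.+1) k :
  (forall j, (1 <= j <= k)%N -> w j != ord_max) -> mcount w k ord_max = 0%N.
Proof.
move=> hw; apply/eqP; rewrite -leqn0 leqNgt -has_count.
by apply/hasPn => j; rewrite mem_iota => hj; apply: hw; lia.
Qed.

Lemma weight_le_mtilde s (m : 'I_s -> nat) M (t v : vec s) : vle t v ->
  (M ^ vnorm t * \prod_(i < s) m i ^ (v i - t i) <=
   \prod_(i < s) maxn 1 (m i) ^ v i * maxn 1 M ^ vnorm v)%N.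
Proof.
move=> ht; rewrite mulnC; apply: leq_mul.
  apply: leq_prod => i _; apply: leq_trans (leq_exp2rW _ (leq_maxr 1 (m i))) _.
  by apply: leq_pexp2l; [rewrite leq_max | exact: leq_subr].
apply: leq_trans (leq_exp2rW _ (leq_maxr 1 M)) _.
by apply: leq_pexp2l; [rewrite leq_max | exact: vnorm_le].
Qed.

Lemma weight_le_exp s (m : 'I_s -> nat) M k (t v q : vec s) : vle t v -> vle v q ->
  (forall i, m i <= k)%N -> (M <= k)%N -> (1 <= k)%N ->
  (M ^ vnorm t * \prod_(i < s) m i ^ (v i - t i) <= k ^ vnorm q)%N.
Proof.
move=> ht hv hm hM hk.
apply: (@leq_trans (k ^ vnorm t * \prod_(i < s) k ^ (v i - t i))).
  by apply: leq_mul; [exact: leq_exp2rW | apply: leq_prod => i _; exact: leq_exp2rW].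
rewrite -expn_sum -expnD; apply: leq_pexp2l => //.
have -> : (vnorm t + \sum_(i < s) (v i - t i) = vnorm v)%N.
  rewrite /vnorm -big_split /=; apply: eq_bigr => i _.
  by rewrite subnKC //; apply: (forallP ht).
exact: vnorm_le.
Qed.

Lemma fact_ratio_ge0 {R : realFieldType} s (q r : vec s) : 0 <= (fact_ratio q r : R).
Proof. by apply: prodr_ge0 => i _; rewrite divr_ge0 ?ler0n. Qed.

Lemma fact_ratio_le {R : realFieldType} s (q r : vec s) :
  (fact_ratio q r : R) <= \prod_(i < s) (q i)`!%:R.
Proof.
apply: ler_prod => i _; rewrite divr_ge0 ?ler0n //=.
have hr : 0 < ((r i)`!%:R : R) by rewrite ltr0n fact_gt0.
by rewrite ler_pdivrMr // ler_peMr ?ler0n // ler1n fact_gt0.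
Qed.

Lemma fact_ratio_ge1 {R : realFieldType} s (q r : vec s) : vle r q -> 1 <= (fact_ratio q r : R).
Proof.
move=> /forallP h; apply: (le_trans (y := \prod_(i < s) (1 : R))); first by rewrite big1_eq.
apply: ler_prod => i _; rewrite ler01 /=.
have hr : 0 < ((r i)`!%:R : R) by rewrite ltr0n fact_gt0.
by rewrite ler_pdivlMr // mul1r ler_nat leq_fact.
Qed.

Section UpperBound.

Variable R : realFieldType.
Variable s : nat.
Variable p : 'I_s -> R.
Hypothesis p_gt0 : forall i, 0 < p i.
Hypothesis plast_gt0 : 0 < plast p.

Definition inv_bound : R := 1 + (plast p)^-1 + \sum_(i < s) (p i)^-1.

Lemma inv_bound_ge1 : 1 <= inv_bound.
Proof.
have : 0 <= \sum_(i < s) (p i)^-1 by apply: sumr_ge0 => i _; rewrite invr_ge0 ltW.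
have : 0 <= (plast p)^-1 by rewrite invr_ge0 ltW.
by rewrite /inv_bound; lra.
Qed.

Lemma inv_plast_ge0 : 0 <= (plast p)^-1.
Proof. by rewrite invr_ge0 ltW. Qed.

Lemma inv_p_ge0 i : 0 <= (p i)^-1.
Proof. by rewrite invr_ge0 ltW. Qed.

Lemma inv_bound_ge0 : 0 <= inv_bound.
Proof. exact: le_trans ler01 inv_bound_ge1. Qed.

Lemma inv_plast_le : (plast p)^-1 <= inv_bound.
Proof.
have : 0 <= \sum_(i < s) (p i)^-1 by apply: sumr_ge0 => i _; rewrite invr_ge0 ltW.
by rewrite /inv_bound; lra.
Qed.

Lemma inv_p_le i : (p i)^-1 <= inv_bound.
Proof.
have : (p i)^-1 <= \sum_(j < s) (p j)^-1.
  by rewrite (bigD1 i) //= lerDl; apply: sumr_ge0 => j _; rewrite invr_ge0 ltW.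
have : 0 <= (plast p)^-1 by rewrite invr_ge0 ltW.
by rewrite /inv_bound; lra.
Qed.

Lemma lin_coef_norm_le M (t : vec s) :
  `|lin_coef (plast p)^-1 M t| <= inv_bound ^+ vnorm t * (M ^ vnorm t)%:R.
Proof.
have hF : 1 <= \prod_(i < s) ((t i)`!%:R : R).
  by rewrite -natr_prod ler1n prodn_gt0 // => i; exact: fact_gt0.
have hF0 := lt_le_trans ltr01 hF.
rewrite /lin_coef !normrM normrX normrN normr_nat !gtr0_norm ?invr_gt0 //.
rewrite -[X in _ <= X]mulr1.
apply: ler_pM; rewrite ?mulr_ge0 ?exprn_ge0 ?ler0n ?inv_plast_ge0 ?invr_ge0 ?(ltW hF0) //.
  apply: ler_pM; rewrite ?exprn_ge0 ?ler0n ?inv_plast_ge0 ?ler_nat ?ffact_le_exp //.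
  by apply: lerXn2r; rewrite ?nnegrE ?inv_plast_ge0 ?inv_bound_ge0 ?inv_plast_le.
by rewrite invf_le1.
Qed.

Lemma binom_coef_norm_le m (u : vec s) :
  `|binom_coef p m u| <= inv_bound ^+ vnorm u * (\prod_(i < s) m i ^ u i)%:R.
Proof.
rewrite /binom_coef normr_prod natr_prod -(prodrXr inv_bound) -big_split /=.
apply: ler_prod => i _; rewrite normrM normr_nat normrX gtr0_norm ?invr_gt0 //.
rewrite mulr_ge0 ?ler0n ?exprn_ge0 ?inv_p_ge0 //= [X in _ <= X]mulrC.
apply: ler_pM; rewrite ?ler0n ?exprn_ge0 ?inv_p_ge0 ?ler_nat ?bin_le_exp //.
by apply: lerXn2r; rewrite ?nnegrE ?inv_p_ge0 ?inv_bound_ge0 ?inv_p_le.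
Qed.

Lemma gterm_norm_le m M (v t : vec s) :
  `|gterm p m M v t| <=
  inv_bound ^+ vnorm v * (M ^ vnorm t * \prod_(i < s) m i ^ (v i - t i))%:R.
Proof.
rewrite /gterm; case: (boolP (vle t v)) => ht; last first.
  by rewrite /= !mul0r normr0 mulr_ge0 ?exprn_ge0 ?inv_bound_ge0.
have -> : inv_bound ^+ vnorm v = inv_bound ^+ vnorm t * inv_bound ^+ vnorm (vsub v t).
  by rewrite -exprD vnorm_vsub // subnKC // vnorm_le.
rewrite mul1r normrM natrM mulrACA.
apply: ler_pM; rewrite ?normr_ge0 ?lin_coef_norm_le //.
apply: le_trans (binom_coef_norm_le m _) _.
by under eq_bigr => i _ do rewrite vsubE.
Qed.

Lemma gcoef_norm_le m M (q v : vec s) (Y : nat) : vle v q ->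
  (forall t, vle t v -> (M ^ vnorm t * \prod_(i < s) m i ^ (v i - t i) <= Y)%N) ->
  `|gcoef p m M v| <= ((vnorm q).+1 ^ s)%:R * (inv_bound ^+ vnorm q * Y%:R).
Proof.
move=> hvq hY; have hN := in_box_vle hvq (in_box_vnorm q).
rewrite (gcoef_boxsum _ _ _ hN); apply: le_trans (ler_norm_sum _ _ _) _.
set bound := inv_bound ^+ vnorm q * Y%:R.
apply: (le_trans (y := \sum_(l : {ffun 'I_s -> 'I_(vnorm q).+1}) bound)); last first.
  by rewrite sumr_const card_ffun !card_ord mulr_natl.
apply: ler_sum => l _; case: (boolP (vle (vec_of l) v)) => ht; last first.
  by rewrite /gterm (negbTE ht) !mul0r normr0 mulr_ge0 ?exprn_ge0 ?inv_bound_ge0.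
apply: le_trans (gterm_norm_le m M _ _) _.
apply: ler_pM; rewrite ?exprn_ge0 ?inv_bound_ge0 ?ler0n ?ler_nat ?hY //.
by apply: ler_weXn2l; [exact: inv_bound_ge1 | exact: vnorm_le].
Qed.

Definition upper_const (q : vec s) : R :=
  \prod_(i < s) (q i)`!%:R * ((vnorm q).+1 ^ s)%:R * inv_bound ^+ vnorm q.

Lemma upper_const_ge1 q : 1 <= upper_const q.
Proof.
rewrite /upper_const !mulr_ege1 ?exprn_ege1 ?inv_bound_ge1 ?ler1n ?expn_gt0 //.
by rewrite -natr_prod ler1n prodn_gt0 // => i; exact: fact_gt0.
Qed.

Lemma norm_AM_le w k (q r : vec s) (Y : nat) : vle r q ->
  (forall t, vle t (vsub q r) ->
     (mcount w k ord_max ^ vnorm t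
      * \prod_(i < s) mcount_lift w k i ^ (vsub q r i - t i) <= Y)%N) ->
  `|AM p w k q r| <= upper_const q * Y%:R.
Proof.
move=> hrq hY; have p_neq0 i := lt0r_neq0 (p_gt0 i).
rewrite (AM_closed p_neq0 (lt0r_neq0 plast_gt0) _ _ hrq) normrM ger0_norm ?fact_ratio_ge0 //.
have hG := gcoef_norm_le (vle_vsub q r) hY.
apply: le_trans (ler_pM (fact_ratio_ge0 q r) (normr_ge0 _) (fact_ratio_le q r) hG) _.
by rewrite /upper_const !mulrA.
Qed.

Lemma norm_AM_le_mtilde w k (q r : vec s) : vle r q ->
  `|AM p w k q r| <=
  upper_const q * (\prod_(i < s) (mtilde w k (lift ord_max i))%:R ^+ (q i - r i))
  * (mtilde w k ord_max)%:R ^+ (vnorm q - vnorm r).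
Proof.
move=> hrq; apply: le_trans (norm_AM_le hrq (fun t ht => weight_le_mtilde _ _ ht)) _.
rewrite natrM natr_prod natrX vnorm_vsub // mulrA le_eqVlt; apply/orP; left; apply/eqP.
by congr (_ * _ * _); apply: eq_bigr => i _; rewrite natrX vsubE.
Qed.

Lemma norm_AM_le_exp w k (q r : vec s) : (1 <= k)%N -> vle r q ->
  `|AM p w k q r| <= upper_const q * k%:R ^+ vnorm q.
Proof.
move=> hk hrq; rewrite -natrX; apply: norm_AM_le => // t ht.
by apply: weight_le_exp ht (vle_vsub q r) _ (mcount_le w k ord_max) hk => i; exact: mcount_le.
Qed.

End UpperBound.

(** * Lower bound *)

Section LowerBound.

Variable R : realFieldType.
Variable s : nat.

Definition lower_const (q : vec s) : R := \prod_(i < s) (((q i).+1 ^ q i * (q i)`!)%:R)^-1.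

Lemma lower_const_gt0 q : 0 < lower_const q.
Proof.
by apply: prodr_gt0 => i _; rewrite invr_gt0 ltr0n muln_gt0 expn_gt0 fact_gt0.
Qed.

Lemma binom_ge_pow (x : R) m u q : 1 <= x -> (u < m)%N -> (u <= q)%N ->
  ((q.+1 ^ q * q`!)%:R)^-1 * m%:R ^+ u <= 'C(m, u)%:R * x ^+ u.
Proof.
move=> hx hum huq; rewrite -[X in X <= _]mulr1.
have hD : 0 < ((q.+1 ^ q * q`!)%:R : R) by rewrite ltr0n muln_gt0 expn_gt0 fact_gt0.
apply: ler_pM; rewrite ?mulr_ge0 ?invr_ge0 ?ler0n ?exprn_ge0 ?(ltW hD) ?exprn_ege1 //.
by rewrite mulrC -natrX ler_pdivrMr // -natrM ler_nat exp_le_bin.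
Qed.

Lemma AM_ge_lower (p : 'I_s -> R) w k (q r : vec s) :
  (forall i, 0 < p i < 1) -> 0 < plast p -> vle r q ->
  (forall j, (1 <= j <= k)%N -> w j != ord_max) ->
  (forall i, (q i - r i < mcount w k (lift ord_max i))%N) ->
  lower_const q * \prod_(i < s) (mcount w k (lift ord_max i))%:R ^+ (q i - r i)
  <= AM p w k q r.
Proof.
move=> hp hP hrq hw hm.
have p_gt0 i : 0 < p i by case/andP: (hp i).
rewrite (AM_closed (fun i => lt0r_neq0 (p_gt0 i)) (lt0r_neq0 hP) _ _ hrq).
rewrite mcount_last_eq0 // gcoef0 /binom_coef /lower_const -big_split /=.
apply: le_trans (ler_peMl _ (fact_ratio_ge1 hrq)); last first.
  by apply: prodr_ge0 => i _; rewrite mulr_ge0 ?ler0n ?exprn_ge0 ?invr_ge0 ?(ltW (p_gt0 i)).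
apply: ler_prod => i _; rewrite vsubE mulr_ge0 ?invr_ge0 ?ler0n ?exprn_ge0 //=.
apply: binom_ge_pow (hm i) (leq_subr _ _).
by rewrite invf_ge1 // ltW //; case/andP: (hp i).
Qed.

End LowerBound.

Unset Implicit Arguments.
Set Strict Implicit.

Theorem mainTheorem17 (R : realFieldType) (s : nat) (hs : (1 <= s)%N) :
  (forall (p : 'I_s -> R),
     (forall i, 0 < p i < 1) -> \sum_(i < s) p i < 1 ->
   forall (w : nat -> 'I_s.+1) (k : nat), (1 <= k)%N ->
   forall q r : vec s, vle r q ->
     let m := mcount w k in
     AM p w k q r =
     sumle [ffun i => (q i - r i)%N] (fun t =>
       if [forall i, (q i - r i - m (lift ord_max i) <= t i)%N]
          && (vnorm t <= m ord_max)%N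
       then (-1) ^+ vnorm t * (plast p)^-1 ^+ vnorm t
            * ((m ord_max)`!%:R / (m ord_max - vnorm t)`!%:R)
            * \prod_(i < s)
                ((m (lift ord_max i))`!%:R * (q i)`!%:R
                 / ((m (lift ord_max i) - (q i - r i - t i))`!%:R
                    * (q i - r i - t i)`!%:R * (t i)`!%:R * (r i)`!%:R
                    * p i ^+ (q i - r i - t i)))
       else 0)) /\
  (forall (p : 'I_s -> R),
     (forall i, 0 < p i < 1) -> \sum_(i < s) p i < 1 ->
   forall q : vec s,
   exists K : R, 1 <= K /\
   forall (w : nat -> 'I_s.+1) (k : nat), (1 <= k)%N ->
   forall r : vec s, vle r q ->
     `|AM p w k q r| <=
        K * (\prod_(i < s) (mtilde w k (lift ord_max i))%:R ^+ (q i - r i))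
          * (mtilde w k ord_max)%:R ^+ (vnorm q - vnorm r)
     /\ `|AM p w k q r| <= K * k%:R ^+ vnorm q) /\
  (forall q : vec s,
   exists K' : R, 0 < K' /\
   forall (p : 'I_s -> R),
     (forall i, 0 < p i < 1) -> \sum_(i < s) p i < 1 ->
   forall (w : nat -> 'I_s.+1) (k : nat), (1 <= k)%N ->
   forall r : vec s, vle r q ->
     (forall j, (1 <= j <= k)%N -> w j != ord_max) ->
     (forall i : 'I_s, (q i - r i < mcount w k (lift ord_max i))%N) ->
     K' * \prod_(i < s) (mcount w k (lift ord_max i))%:R ^+ (q i - r i)
       <= AM p w k q r).
Proof.
have p_pos (p : 'I_s -> R) : (forall i, 0 < p i < 1) -> \sum_(i < s) p i < 1 ->
    (forall i, 0 < p i) /\ 0 < plast p.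
  by move=> hp hsum; split=> [i|]; [case/andP: (hp i) | rewrite /plast subr_gt0].
split; [|split].
- move=> p hp hsum w k _ q r hrq; have [hp0 hP0] := p_pos p hp hsum.
  exact: (AM_formula (fun i => lt0r_neq0 (hp0 i)) (lt0r_neq0 hP0)).
- move=> p hp hsum q; have [hp0 hP0] := p_pos p hp hsum.
  exists (upper_const p q); split=> [|w k hk r hrq]; first exact: upper_const_ge1.
  by split; [exact: norm_AM_le_mtilde | exact: norm_AM_le_exp].
- move=> q; exists (lower_const R q); split=> [|p hp hsum w k _ r hrq].
    exact: lower_const_gt0.
  by have [_ hP0] := p_pos p hp hsum; exact: AM_ge_lower.
Qed.
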